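(* Consider the periodic chain (cycle graph) with sites $1,\dots,N$ (indices mod $N$) and let $S^\dagger_{(2)}=\sum_{i=1}^N s_i^\dagger s_{i+1}^\dagger$. For all positive integers $k,R$ there exists $N_0(k,R)$, independent of $N$, such that for every $N>N_0(k,R)$ the following holds: if $H$ is a $k$-local operator of range at most $R$ on the chain with $H|Q^p\rangle=E_p|Q^p\rangle$ for all $p\in\{0,\dots,L\}$, where $|Q^p\rangle=(S^\dagger_{(2)})^p|\overline 0\rangle$ and $L$ is the largest integer with $|Q^L\rangle\ne0$, then there are constants $\Omega,\omega$ with $E_p=\Omega+\omega p$ for all $p\in\{0,\dots,L\}$. (Equivalently, $S^\dagger_{(2)}$ satisfies properties (P.1), (P.2), (P.3) of Theorem 3 for suitable functions $\alpha,\beta,\gamma$ independent of $N$, with (P.1) holding once $N$ is sufficiently large relative to $R$.)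
   Context: Qubits on sites of the cycle with local basis $|0\rangle,|1\rangle$; $s_i^\dagger$ acts on site $i$ as $s^\dagger|0\rangle=|1\rangle$, $s^\dagger|1\rangle=0$, $s_i=(s_i^\dagger)^\dagger$; $|\overline 0\rangle=|0\rangle^{\otimes N}$. Distance is graph distance on the cycle. Every operator has a unique expansion in normal-ordered strings $s^\dagger_{j_1}\cdots s^\dagger_{j_n}s_{k_1}\cdots s_{k_m}$ (the $j$'s pairwise distinct, the $k$'s pairwise distinct); a string has range $R$ where $R$ is the smallest positive integer with all pairwise distances between its sites $<R$; an operator has range at most $R$ if all its strings with nonzero coefficient do, and is $k$-local if each such string involves at most $k$ sites. Operators need not be Hermitian. *)

From HB Require Import structures.
From mathcomp Require Import all_boot all_order all_algebra.
Set Implicit Arguments. Unset Strict Implicit. Unset Printing Implicit Defensive.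
Import Order.TTheory GRing.Theory Num.Theory.
Local Open Scope ring_scope.

(* Qubits on the cycle with sites 'I_N (site i+1 is [ordS i], i.e. (i+1) mod N).
   Computational basis state |x> is labelled by the set x : {set 'I_N} of sites
   in state |1>. *)
Section Chain.
Variable C : numClosedFieldType.
Variable N : nat.

Definition site := 'I_N.
Definition state := {ffun {set 'I_N} -> C}.

(* s_i^dagger : |x> |-> |x ∪ {i}> if i ∉ x, else 0 *)
Definition sdag (i : 'I_N) (v : state) : state :=
  [ffun y : {set 'I_N} => if i \in y then v (y :\ i) else 0].

(* s_i : |x> |-> |x \ {i}> if i ∈ x, else 0 *)
Definition slow (i : 'I_N) (v : state) : state :=
  [ffun y : {set 'I_N} => if i \in y then 0 else v (i |: y)].

Definition string_op (J K : {set 'I_N}) (v : state) : state :=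
  foldr sdag (foldr slow v (enum K)) (enum J).

(* An operator, given by its (unique) normal-ordered expansion
   H = sum_{J,K} c J K  s^dag_J s_K *)
Definition op_apply (c : {set 'I_N} -> {set 'I_N} -> C) (v : state) : state :=
  [ffun y => \sum_(J : {set 'I_N}) \sum_(K : {set 'I_N}) c J K * string_op J K v y].

Definition cdist (i j : 'I_N) : nat :=
  let a := if (i <= j)%N then (j - i)%N else (i - j)%N in minn a (N - a).

Definition klocal (k : nat) (c : {set 'I_N} -> {set 'I_N} -> C) : Prop :=
  forall J K, c J K != 0 -> (#|J :|: K| <= k)%N.

Definition range_le (R : nat) (c : {set 'I_N} -> {set 'I_N} -> C) : Prop :=
  forall J K, c J K != 0 ->
    forall i j, i \in J :|: K -> j \in J :|: K -> (cdist i j < R)%N.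

Definition vac : state := [ffun y => (y == set0)%:R].

Definition S2 (v : state) : state :=
  \sum_(i : 'I_N) sdag i (sdag (ordS i) v).

Definition Qp (p : nat) : state := iter p S2 vac.

End Chain.

From HB Require Import structures.
From mathcomp Require Import all_boot all_order all_algebra.
From mathcomp Require Import zify ring.
Import Order.TTheory GRing.Theory Num.Theory.
Local Open Scope ring_scope.
Set Implicit Arguments. Unset Strict Implicit. Unset Printing Implicit Defensive.

(* The amplitude [Qp p y] of |Q^p> on a configuration y counts the ordered tilings of y
   by p dominoes {i, i+1}, so it obeys local recursions: an isolated domino {a, a+1}
   can only be tiled by itself, giving Q_{q+1}(Z u {a,a+1}) = (q+1) Q_q(Z), and an
   isolated triple {a, a+1, a+2} gives
   Q_{q+1}(Z u {a,a+1,a+2}) = (q+1) (Q_q(Z u {a}) + Q_q(Z u {a+2})).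
   Take two such patterns in regions A = {0,1,2} and B = {R+3,...,R+5}, which are at
   distance >= R, so every string of H misses A or B and commutes with the recursion
   there.  The second difference of the amplitudes of H|Q^{p+2}>, H|Q^{p+1}>, H|Q^p>
   along the two recursions therefore vanishes string by string, while the eigenvalue
   equations turn it into (E_{p+2} - 2 E_{p+1} + E_p) Q_{p+2}(y).  A configuration y with
   Q_{p+2}(y) <> 0 exists for every p with 2(p+2) <= N (two dominoes and a tiled block
   for small p, an interval containing two triples for large p), so E is affine. *)

Lemma disjoint_setUr (T : finType) (D A B : {set T}) :
  [disjoint D & A :|: B] = [disjoint D & A] && [disjoint D & B].
Proof.
rewrite ![[disjoint D & _]]disjoint_sym -disjointU.
by apply: eq_disjoint => x; rewrite !inE.
Qed.

Section Chain.
Variables (C : numClosedFieldType) (N : nat).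
Local Notation Q := (Qp C N).
Local Notation nx := (@ordS N).
Local Notation pv := (@ord_pred N).
Implicit Types (X y f fA fB W Z J K D DA DB B : {set 'I_N}) (xs xsA xsB : seq {set 'I_N}).
Implicit Types (a i : 'I_N) (q : nat).

Lemma foldr_sdagE (s : seq 'I_N) (v : state C N) y : uniq s ->
  foldr (@sdag C N) v s y = if all (mem y) s then v (y :\: [set x in s]) else 0.
Proof.
elim: s y => [|i s IH] y /=.
  by move=> _; congr (v _); apply/setP=> x; rewrite !inE.
case/andP=> iNs us; rewrite /sdag ffunE IH //.
have [iy|] //= := boolP (i \in y).
have -> : all (mem (y :\ i)) s = all (mem y) s.
  apply: eq_in_all => x xs /=.
  by rewrite !inE (_ : x != i) //; apply: contraNneq iNs => <-.
by case: ifP => // _; congr (v _); apply/setP=> x; rewrite !inE; case: (x == i); case: (x \in s).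
Qed.

Lemma foldr_slowE (s : seq 'I_N) (v : state C N) y : uniq s ->
  foldr (@slow C N) v s y = if all [predC y] s then v (y :|: [set x in s]) else 0.
Proof.
elim: s y => [|i s IH] y /=.
  by move=> _; congr (v _); apply/setP=> x; rewrite !inE orbF.
case/andP=> iNs us; rewrite /slow ffunE IH //.
have [//|_] := boolP (i \in y).
have -> : all [predC i |: y] s = all [predC y] s.
  apply: eq_in_all => x xs /=.
  by rewrite !inE (_ : x == i = false) //; apply/eqP=> exi; rewrite -exi xs in iNs.
by case: ifP => // _; congr (v _); apply/setP=> x; rewrite !inE orbCA orbA.
Qed.

Definition string_admissible (J K y : {set 'I_N}) :=
  (J \subset y) && [disjoint K & y :\: J].

Lemma string_opE J K (v : state C N) y :
  string_op J K v y = if string_admissible J K y then v (y :\: J :|: K) else 0.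
Proof.
rewrite /string_op foldr_sdagE ?enum_uniq // set_enum /string_admissible.
have -> : all (mem y) (enum J) = (J \subset y).
  by apply/allP/subsetP => sub x; [rewrite -mem_enum|rewrite mem_enum] => /sub.
case: (J \subset y) => //=.
rewrite foldr_slowE ?enum_uniq // set_enum.
by rewrite -(eq_disjoint (mem_enum K)) disjoint_has -all_predC.
Qed.

Definition domino a : {set 'I_N} := [set a; nx a].
Definition triomino a : {set 'I_N} := [set a; nx a; nx (nx a)].

Definition domino_term q (y : {set 'I_N}) i : C :=
  if (i \in y) && (nx i \in y) then Q q (y :\ i :\ nx i) else 0.

Hypothesis N_gt1 : (1 < N)%N.

Lemma ordS_neq (i : 'I_N) : nx i != i.
Proof.
apply/eqP => /(congr1 val) /=; case: i N_gt1 => i /= ltiN N1.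
by case: (ltngtP i.+1 N) => [lt|gt|eNi]; [rewrite modn_small|lia|rewrite -eNi modnn]; lia.
Qed.

Lemma QpS q y : Q q.+1 y = \sum_i domino_term q y i.
Proof.
rewrite /Qp iterS /S2 sum_ffunE; apply: eq_bigr => i _.
rewrite /domino_term /sdag !ffunE !inE (negbTE (ordS_neq i)) /=.
by case: (i \in y); case: (nx i \in y).
Qed.

Lemma Qp0 y : Q 0 y = (y == set0)%:R.
Proof. by rewrite /Qp /= /vac ffunE. Qed.

Lemma Qp0_eq0 y x : x \in y -> Q 0 y = 0.
Proof. by rewrite Qp0; case: eqP => // ->; rewrite inE. Qed.

Lemma Qp_ge0 q y : 0 <= Q q y.
Proof.
elim: q y => [|q IH] y; first by rewrite Qp0 ler0n.
by rewrite QpS; apply: sumr_ge0 => i _; rewrite /domino_term; case: ifP.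
Qed.

Lemma domino_term_ge0 q y i : 0 <= domino_term q y i.
Proof. by rewrite /domino_term; case: ifP => // _; apply: Qp_ge0. Qed.

Lemma domino_term_le q y i : i \in y -> nx i \in y -> Q q (y :\ i :\ nx i) <= Q q.+1 y.
Proof.
move=> iy niy; rewrite QpS (bigD1 i) //= {1}/domino_term iy niy lerDl.
by apply: sumr_ge0 => j _; apply: domino_term_ge0.
Qed.

Lemma Qp_card q y : Q q y != 0 -> #|y| = (2 * q)%N.
Proof.
elim: q y => [|q IH] y.
  by rewrite Qp0; case: (eqVneq y set0) => [->|_]; rewrite ?cards0 ?eqxx.
rewrite QpS => Qneq0.
have /existsP[i] : [exists i, domino_term q y i != 0].
  apply: contraR Qneq0 => /existsPn zero.
  by apply/eqP/big1 => i _; apply/eqP/negbNE/zero.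
rewrite /domino_term; case: ifP => [/andP[iy niy]|]; last by rewrite eqxx.
move/IH; rewrite (cardsD1 i y) iy (cardsD1 (nx i) (y :\ i)) !inE niy ordS_neq /=.
by move=> ->; rewrite mulnS.
Qed.

Lemma Qp_neq0_le q : Q q != 0 -> (2 * q <= N)%N.
Proof.
move=> Qneq0; have /existsP [y Qy] : [exists y, Q q y != 0].
  apply: contraR Qneq0 => /existsPn zero; apply/eqP/ffunP => y.
  by rewrite ffunE; apply/eqP/negbNE/zero.
by rewrite -(Qp_card Qy) -[X in (_ <= X)%N]card_ord max_card.
Qed.

Lemma Qp_isolated q y s : s \in y -> pv s \notin y -> nx s \notin y -> Q q y = 0.
Proof.
elim: q y => [|q IH] y sy psy nsy; first exact: Qp0_eq0 sy.
rewrite QpS; apply: big1 => i _; rewrite /domino_term; case: ifP => // /andP[iy niy].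
have si : s != i by apply: contraNneq nsy => ->.
have sni : s != nx i by apply: contraNneq psy => ->; rewrite ordSK.
by apply: IH; rewrite !inE ?sy ?si ?sni ?(negbTE psy) ?(negbTE nsy) ?andbF.
Qed.

Hypothesis N_gt4 : (4 < N)%N.

Lemma iter_ordS_val a k : val (iter k nx a) = ((a + k) %% N)%N.
Proof.
elim: k => [|k IH] /=; first by rewrite addn0 modn_small.
by rewrite IH -addn1 modnDml addn1 addnS.
Qed.

Lemma iter_ordS_neq a j k : (j < k <= 4)%N -> iter j nx a != iter k nx a.
Proof.
move=> ltjk; apply/eqP => /(congr1 val); rewrite !iter_ordS_val => /eqP.
rewrite eqn_modDl !modn_small; lia.
Qed.

Lemma ord_pred_neq a k : (k <= 3)%N -> pv a != iter k nx a.
Proof.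
move=> lek3; apply: contra (@iter_ordS_neq a 0 k.+1 lek3) => /eqP epk /=.
by rewrite -epk ord_predK.
Qed.

(* Puts the pairwise distinctness of a-1, a, ..., a+4 in the context. *)
Ltac neighbours a :=
  move: (@iter_ordS_neq a 0 1 isT) (@iter_ordS_neq a 0 2 isT) (@iter_ordS_neq a 0 3 isT)
        (@iter_ordS_neq a 0 4 isT) (@iter_ordS_neq a 1 2 isT) (@iter_ordS_neq a 1 3 isT)
        (@iter_ordS_neq a 1 4 isT) (@iter_ordS_neq a 2 3 isT) (@ord_pred_neq a 0 isT)
        (@ord_pred_neq a 1 isT) (@ord_pred_neq a 2 isT) (@ord_pred_neq a 3 isT)
   => /= ? ? ? ? ? ? ? ? ? ? ? ?.

Ltac neq_simpl :=
  repeat match goal with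
  | H : is_true (?u != ?v) |- context[?u == ?v] => rewrite (negbTE H)
  | H : is_true (?u != ?v) |- context[?v == ?u] => rewrite (eq_sym v u) (negbTE H)
  | H : is_true (?u \notin ?W) |- context[?u \in ?W] => rewrite (negbTE H)
  | H : is_true (?u \in ?W) |- context[?u \in ?W] => rewrite H
  end; rewrite ?eqxx ?orbF ?orbT ?andbT ?andbF ?andTb ?andFb ?orTb ?orFb.

Ltac set_eq :=
  apply/setP; let x := fresh "x" in move=> x; rewrite !inE; neq_simpl;
  repeat match goal with |- context[x == ?p] => case: (eqVneq x p) => [->|?]; neq_simpl end;
  repeat match goal with |- context[?u \in ?V] => case: (u \in V) end; done.

Lemma Qp_gt0_setU_domino q W a :
  0 < Q q W -> a \notin W -> nx a \notin W -> 0 < Q q.+1 (W :|: domino a).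
Proof.
move=> QW aW naW; apply: lt_le_trans QW _; have naa := ordS_neq a.
rewrite -{1}(_ : (W :|: domino a) :\ a :\ nx a = W); last by rewrite /domino; set_eq.
by apply: domino_term_le; rewrite !inE eqxx ?orbT.
Qed.

Lemma domino_term_setU q W a i :
    a \notin W -> nx a \notin W -> (pv a \notin W) || (nx (nx a) \notin W) ->
  domino_term q (W :|: domino a) i =
    (if i == a then Q q W else 0)
    + (if (i \in W) && (nx i \in W) then Q q (W :\ i :\ nx i :|: domino a) else 0).
Proof.
move=> aW naW pvW; neighbours a; rewrite /domino_term /domino.
have [->|ia] := eqVneq i a.
  by rewrite !inE; neq_simpl; rewrite addr0; congr (Q q _); set_eq.
rewrite add0r.
have [->|ipa] := eqVneq i (pv a).
  rewrite ord_predK !inE; neq_simpl; case: ifP => // pWa.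
  have nnaW : nx (nx a) \notin W by rewrite pWa in pvW.
  by apply: (@Qp_isolated _ _ (nx a)); rewrite !inE ?ordSK; neq_simpl.
have [->|ina] := eqVneq i (nx a).
  rewrite !inE; neq_simpl; case: ifP => // nnaW.
  have pWa : pv a \notin W by rewrite nnaW orbF in pvW.
  by apply: (@Qp_isolated _ _ a); rewrite !inE; neq_simpl.
have nia : nx i != a by apply: contra ipa => /eqP <-; rewrite ordSK.
have nina : nx i != nx a by apply: contra ia => /eqP /ordS_inj ->.
by rewrite !inE; neq_simpl; case: ifP => // _; congr (Q q _); set_eq.
Qed.

(* If both a-1 and a+2 were occupied, a-1 could be paired with a and a+1 with a+2. *)
Lemma Qp_setU_domino q W a :
    a \notin W -> nx a \notin W -> (pv a \notin W) || (nx (nx a) \notin W) ->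
  Q q.+1 (W :|: domino a) = q.+1%:R * Q q W.
Proof.
elim: q W => [|q IH] W aW naW pvW; rewrite QpS.
all: rewrite (eq_bigr _ (fun i _ => domino_term_setU _ i aW naW pvW)) big_split /=.
all: rewrite -big_mkcond big_pred1_eq.
  rewrite big1 ?addr0 ?mul1r // => i _; case: ifP => // _.
  by apply: (@Qp0_eq0 _ a); rewrite !inE eqxx orbT.
rewrite (eq_bigr (fun i => q.+1%:R * domino_term q W i)); last first.
  move=> i _; rewrite /domino_term; case: ifP; rewrite ?mulr0 // => /andP[iW niW].
  rewrite IH // !inE ?(negbTE aW) ?(negbTE naW) ?andbF //.
  by case/orP: pvW => /negbTE ->; rewrite !andbF ?orbT.
by rewrite -mulr_sumr -QpS [in RHS]mulrSr mulrDl mul1r addrC.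
Qed.

Lemma domino_term_setU_triomino q Z a i :
    a \notin Z -> nx a \notin Z -> nx (nx a) \notin Z ->
    (forall Z', a \notin Z' -> nx a \notin Z' -> nx (nx a) \notin Z' ->
       Q q.+1 (Z' :|: triomino a) =
       q.+1%:R * (Q q (Z' :|: [set a]) + Q q (Z' :|: [set nx (nx a)]))) ->
  domino_term q.+1 (Z :|: triomino a) i =
    (if i == a then Q q.+1 (Z :|: [set nx (nx a)]) else 0)
    + (if i == nx a then Q q.+1 (Z :|: [set a]) else 0)
    + q.+1%:R * (domino_term q (Z :|: [set a]) i + domino_term q (Z :|: [set nx (nx a)]) i).
Proof.
move=> aZ naZ nnaZ IH; neighbours a; rewrite /domino_term /triomino.
have [->|ia] := eqVneq i a.
  by rewrite !inE; neq_simpl; rewrite !addr0 mulr0 addr0; congr (Q _ _); set_eq.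
have [->|ipa] := eqVneq i (pv a).
  rewrite ord_predK !inE; neq_simpl; rewrite !add0r addr0.
  case: ifP => pvZ; rewrite ?mulr0 //.
  rewrite (_ : _ :\ _ :\ _ = Z :\ pv a :|: domino (nx a)); last by rewrite /domino; set_eq.
  rewrite Qp_setU_domino ?ordSK ?inE; neq_simpl => //.
  by congr (_ * Q q _); set_eq.
have [->|ina] := eqVneq i (nx a).
  by rewrite !inE; neq_simpl; rewrite add0r !addr0 mulr0 addr0; congr (Q _ _); set_eq.
have [->|inna] := eqVneq i (nx (nx a)).
  rewrite !inE; neq_simpl; rewrite !add0r.
  case: ifP => nnnaZ; rewrite ?add0r ?mulr0 //.
  rewrite (_ : _ :\ _ :\ _ = Z :\ nx (nx (nx a)) :|: domino a); last by rewrite /domino; set_eq.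
  rewrite Qp_setU_domino ?inE; neq_simpl => //.
  by congr (_ * Q q _); set_eq.
have nia : nx i != a by apply: contra ipa => /eqP <-; rewrite ordSK.
have nina : nx i != nx a by apply: contra ia => /eqP /ordS_inj ->.
have ninna : nx i != nx (nx a) by apply: contra ina => /eqP /ordS_inj ->.
rewrite !inE; neq_simpl; rewrite !add0r.
case: ifP => [/andP[iZ niZ]|_]; last by rewrite addr0 mulr0.
rewrite (_ : _ :\ _ :\ _ = Z :\ i :\ nx i :|: triomino a); last by rewrite /triomino; set_eq.
by rewrite IH ?inE; neq_simpl => //; congr (_ * (Q q _ + Q q _)); set_eq.
Qed.

Lemma Qp_setU_triomino q Z a :
    a \notin Z -> nx a \notin Z -> nx (nx a) \notin Z ->
  Q q.+1 (Z :|: triomino a) = q.+1%:R * (Q q (Z :|: [set a]) + Q q (Z :|: [set nx (nx a)])).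
Proof.
elim: q Z => [|q IH] Z aZ naZ nnaZ.
  rewrite (@Qp0_eq0 _ a) ?(@Qp0_eq0 _ (nx (nx a))) ?inE ?eqxx ?orbT // addr0 mulr0.
  have [//|/Qp_card card2] := eqVneq (Q 1 (Z :|: triomino a)) 0; neighbours a.
  have := subset_leq_card (subsetUr Z (triomino a)).
  by rewrite card2 /triomino setUC cardsU1 cards2 !inE; neq_simpl.
rewrite QpS (eq_bigr _ (fun i _ => domino_term_setU_triomino i aZ naZ nnaZ IH)).
rewrite !big_split /= -!big_mkcond !big_pred1_eq -mulr_sumr big_split /= -!QpS.
by rewrite [(q.+2)%:R]mulrSr; ring.
Qed.

Lemma string_op_setU J K (v : state C N) Z B :
    [disjoint B & J] -> [disjoint B & K] ->
  string_op J K v (Z :|: B) = if string_admissible J K Z then v (Z :\: J :|: K :|: B) else 0.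
Proof.
move=> BJ BK; rewrite string_opE /string_admissible.
have -> : (J \subset Z :|: B) = (J \subset Z).
  by apply/subsetP/subsetP => JZ x xJ; move: (JZ x xJ); rewrite !inE (disjointFl BJ xJ) orbF.
have -> : [disjoint K & (Z :|: B) :\: J] = [disjoint K & Z :\: J].
  rewrite setDUl disjoint_setUr [[disjoint K & B :\: J]](_ : _ = true) ?andbT //.
  by apply: disjointWr (subsetDl B J) _; rewrite disjoint_sym.
case: ifP => // _; congr (v _); apply/setP => x; rewrite !inE.
have [xB|] := boolP (x \in B); last by rewrite !orbF.
by rewrite (disjointFr BJ xB) (disjointFr BK xB) !orbT.
Qed.

Definition pattern_within D f (xs : seq {set 'I_N}) :=
  (f \subset D) && all (fun x : {set 'I_N} => x \subset D) xs.

Definition local_recursion (F : nat -> {set 'I_N} -> C) D f (xs : seq {set 'I_N}) :=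
  forall q Z, [disjoint D & Z] -> F q.+1 (Z :|: f) = q.+1%:R * \sum_(x <- xs) F q (Z :|: x).

Lemma pattern_within_domino a : pattern_within (triomino a) (domino a) [:: set0].
Proof.
rewrite /pattern_within /= andbT; apply/andP; split; last exact: sub0set.
by apply/subsetP => x; rewrite !inE => /orP[] ->; rewrite ?orbT.
Qed.

Lemma pattern_within_triomino a :
  pattern_within (triomino a) (triomino a) [:: [set a]; [set nx (nx a)]].
Proof. by rewrite /pattern_within /= !sub1set !inE !eqxx ?orbT subxx. Qed.

Lemma local_recursion_domino a :
  local_recursion (fun q y => Q q y) (triomino a) (domino a) [:: set0].
Proof.
move=> q Z DZ; rewrite big_seq1 setU0 Qp_setU_domino //; [| |apply/orP; right].
all: by apply/negbT/(disjointFr DZ); rewrite !inE eqxx ?orbT.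
Qed.

Lemma local_recursion_triomino a :
  local_recursion (fun q y => Q q y) (triomino a) (triomino a) [:: [set a]; [set nx (nx a)]].
Proof.
move=> q Z DZ; rewrite big_cons big_seq1 Qp_setU_triomino //.
all: by apply/negbT/(disjointFr DZ); rewrite !inE eqxx ?orbT.
Qed.

Lemma local_recursion_string_op (F : nat -> state C N) D f xs J K :
    pattern_within D f xs -> [disjoint D & J] -> [disjoint D & K] ->
    local_recursion (fun q y => F q y) D f xs ->
  local_recursion (fun q y => string_op J K (F q) y) D f xs.
Proof.
case/andP=> fD /allP xsD DJ DK rec q Z DZ.
have disj B : B \subset D -> [disjoint B & J] /\ [disjoint B & K].
  by move=> BD; split; apply: disjointWl BD _.
have [fJ fK] := disj f fD.
rewrite string_op_setU // big_seq.
under eq_bigr => x /xsD/disj[xJ xK] do rewrite string_op_setU //.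
rewrite -big_seq; case: ifP => _; last by rewrite big1 ?mulr0.
apply: rec; rewrite disjoint_setUr DK andbT.
by apply: disjointWr (subsetDl Z J) _.
Qed.

Definition second_difference X fA (xsA : seq {set 'I_N}) fB (xsB : seq {set 'I_N}) P
    (F : nat -> {set 'I_N} -> C) : C :=
  F P.+2 (X :|: fA :|: fB)
  - P.+2%:R * \sum_(xb <- xsB) F P.+1 (X :|: fA :|: xb)
  - P.+2%:R * \sum_(xa <- xsA) F P.+1 (X :|: xa :|: fB)
  + P.+2%:R * P.+1%:R * \sum_(xa <- xsA) \sum_(xb <- xsB) F P (X :|: xa :|: xb).

Section SecondDifference.
Variables (X fA fB : {set 'I_N}) (xsA xsB : seq {set 'I_N}) (P : nat).
Local Notation sd := (second_difference X fA xsA fB xsB P).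
Implicit Types (F G : nat -> {set 'I_N} -> C) (x : {set 'I_N}).

Lemma eq_second_difference F G :
    (forall y, F P y = G P y) -> (forall y, F P.+1 y = G P.+1 y) ->
    (forall y, F P.+2 y = G P.+2 y) ->
  sd F = sd G.
Proof.
move=> FG0 FG1 FG2; rewrite /second_difference FG2.
congr (_ - _ * _ - _ * _ + _ * _); apply: eq_bigr => x _ //.
by apply: eq_bigr.
Qed.

Lemma second_difference0 : sd (fun _ _ => 0) = 0.
Proof.
by rewrite /second_difference !big1 ?mulr0 ?subrr ?addr0 // => xa _; rewrite big1.
Qed.

Lemma second_differenceD F G : sd (fun p y => F p y + G p y) = sd F + sd G.
Proof.
rewrite /second_difference [X in _ + _ * X](eq_bigr (fun xa =>
  \sum_(xb <- xsB) F P (X :|: xa :|: xb) + \sum_(xb <- xsB) G P (X :|: xa :|: xb))).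
  by rewrite !big_split /=; ring.
by move=> xa _; rewrite big_split.
Qed.

Lemma second_differenceZ (k : C) F : sd (fun p y => k * F p y) = k * sd F.
Proof.
rewrite /second_difference -!mulr_sumr [X in _ + _ * X](eq_bigr (fun xa =>
  k * \sum_(xb <- xsB) F P (X :|: xa :|: xb))).
  by rewrite -mulr_sumr; ring.
by move=> xa _; rewrite mulr_sumr.
Qed.

Lemma second_difference_sum (I : Type) (r : seq I) (G : I -> nat -> {set 'I_N} -> C) :
  sd (fun p y => \sum_(i <- r) G i p y) = \sum_(i <- r) sd (G i).
Proof.
elim: r => [|i r IH].
  rewrite big_nil -[in RHS]second_difference0.
  by apply: eq_second_difference => y; rewrite big_nil.
rewrite big_cons -IH -second_differenceD.
by apply: eq_second_difference => y; rewrite big_cons.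
Qed.

Lemma second_difference_sym F : sd F = second_difference X fB xsB fA xsA P F.
Proof.
rewrite /second_difference [X :|: fA :|: fB]setUAC.
have eB : \sum_(xb <- xsB) F P.+1 (X :|: fA :|: xb) = \sum_(xb <- xsB) F P.+1 (X :|: xb :|: fA).
  by apply: eq_bigr => xb _; rewrite setUAC.
have eA : \sum_(xa <- xsA) F P.+1 (X :|: xa :|: fB) = \sum_(xa <- xsA) F P.+1 (X :|: fB :|: xa).
  by apply: eq_bigr => xa _; rewrite setUAC.
have eAB : \sum_(xa <- xsA) \sum_(xb <- xsB) F P (X :|: xa :|: xb)
          = \sum_(xb <- xsB) \sum_(xa <- xsA) F P (X :|: xb :|: xa).
  by rewrite exchange_big; apply: eq_bigr => xb _; apply: eq_bigr => xa _; rewrite setUAC.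
by rewrite eA eB eAB; ring.
Qed.

Variables (DA DB : {set 'I_N}).
Hypotheses (disjAB : [disjoint DA & DB]) (disjAX : [disjoint DA & X]).

Lemma local_recursion_setU F q x : local_recursion F DA fA xsA -> x \subset DB ->
  F q.+1 (X :|: fA :|: x) = q.+1%:R * \sum_(xa <- xsA) F q (X :|: xa :|: x).
Proof.
move=> recA xD; rewrite setUAC recA; last by rewrite disjoint_setUr disjAX (disjointWr xD).
by congr (_ * _); apply: eq_bigr => xa _; rewrite setUAC.
Qed.

Lemma second_difference_eq0 F :
  pattern_within DB fB xsB -> local_recursion F DA fA xsA -> sd F = 0.
Proof.
case/andP=> fBD /allP xsBD recA.
have e1 : \sum_(xb <- xsB) F P.+1 (X :|: fA :|: xb)
          = P.+1%:R * \sum_(xa <- xsA) \sum_(xb <- xsB) F P (X :|: xa :|: xb).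
  rewrite exchange_big mulr_sumr big_seq [in RHS]big_seq.
  by apply: eq_bigr => xb /xsBD; apply: local_recursion_setU.
by rewrite /second_difference (local_recursion_setU _ recA fBD) e1; ring.
Qed.

Lemma second_difference_eigen (E : nat -> C) :
    pattern_within DA fA xsA -> pattern_within DB fB xsB -> [disjoint DB & X] ->
    local_recursion (fun q y => Q q y) DA fA xsA -> local_recursion (fun q y => Q q y) DB fB xsB ->
  sd (fun p y => E p * Q p y) = (E P.+2 - 2%:R * E P.+1 + E P) * Q P.+2 (X :|: fA :|: fB).
Proof.
case/andP=> fAD /allP xsAD /andP[fBD _] disjBX recA recB.
have disjB_setU x : x \subset DA -> [disjoint DB & X :|: x].
  by move=> xD; rewrite disjoint_setUr disjBX (disjointWr xD) // disjoint_sym.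
have hB : Q P.+2 (X :|: fA :|: fB) = P.+2%:R * \sum_(xb <- xsB) Q P.+1 (X :|: fA :|: xb).
  exact: recB (disjB_setU _ fAD).
have hA : Q P.+2 (X :|: fA :|: fB) = P.+2%:R * \sum_(xa <- xsA) Q P.+1 (X :|: xa :|: fB).
  exact: (local_recursion_setU P.+1 recA fBD).
have hAB : \sum_(xa <- xsA) Q P.+1 (X :|: xa :|: fB)
           = P.+1%:R * \sum_(xa <- xsA) \sum_(xb <- xsB) Q P (X :|: xa :|: xb).
  rewrite mulr_sumr big_seq [in RHS]big_seq; apply: eq_bigr => xa /xsAD xaD.
  exact: recB (disjB_setU _ xaD).
rewrite /second_difference -!mulr_sumr.
under [X in _ + _ * X]eq_bigr do rewrite -mulr_sumr.
rewrite -mulr_sumr.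
transitivity (E P.+2 * Q P.+2 (X :|: fA :|: fB)
  - E P.+1 * (P.+2%:R * \sum_(xb <- xsB) Q P.+1 (X :|: fA :|: xb))
  - E P.+1 * (P.+2%:R * \sum_(xa <- xsA) Q P.+1 (X :|: xa :|: fB))
  + E P * (P.+2%:R * (P.+1%:R * \sum_(xa <- xsA) \sum_(xb <- xsB) Q P (X :|: xa :|: xb)))).
  by ring.
by rewrite -hAB -hA -hB; ring.
Qed.

End SecondDifference.

Lemma eigenvalue_second_difference_eq0 c (E : nat -> C) L X DA fA xsA DB fB xsB P :
    (forall p, (p <= L)%N -> forall y, op_apply c (Q p) y = E p * Q p y) ->
    (forall J K, c J K != 0 -> [disjoint DA & J :|: K] || [disjoint DB & J :|: K]) ->
    local_recursion (fun q y => Q q y) DA fA xsA -> local_recursion (fun q y => Q q y) DB fB xsB ->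
    pattern_within DA fA xsA -> pattern_within DB fB xsB ->
    [disjoint DA & DB] -> [disjoint DA & X] -> [disjoint DB & X] ->
    (P.+2 <= L)%N -> Q P.+2 (X :|: fA :|: fB) != 0 ->
  E P.+2 - 2%:R * E P.+1 + E P = 0.
Proof.
move=> eig loc recA recB patA patB dAB dAX dBX PL Qneq0.
pose sd := second_difference X fA xsA fB xsB P.
have sd_op : sd (fun p y => op_apply c (Q p) y) = 0.
  rewrite /sd (@eq_second_difference _ _ _ _ _ _ _
    (fun p y => \sum_J \sum_K c J K * string_op J K (Q p) y)); try by move=> y; rewrite ffunE.
  rewrite second_difference_sum big1 // => J _; rewrite second_difference_sum big1 // => K _.
  rewrite second_differenceZ; have [->|cJK] := eqVneq (c J K) 0; first by rewrite mul0r.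
  have disjJK D : [disjoint D & J :|: K] -> [disjoint D & J] /\ [disjoint D & K].
    by rewrite disjoint_setUr => /andP.
  case/orP: (loc J K cJK) => /disjJK[DJ DK].
    rewrite (second_difference_eq0 P dAB dAX) ?mulr0 //.
    exact: local_recursion_string_op.
  rewrite second_difference_sym (second_difference_eq0 P (DB := DA) _ dBX) ?mulr0 //.
    by rewrite disjoint_sym.
  exact: local_recursion_string_op.
have sd_eig : sd (fun p y => op_apply c (Q p) y) = sd (fun p y => E p * Q p y).
  by apply: eq_second_difference => y; apply: eig; lia.
move: sd_op; rewrite sd_eig /sd (second_difference_eigen P dAB dAX) // => /eqP.
by rewrite mulf_eq0 (negbTE Qneq0) orbF => /eqP.
Qed.

End Chain.

Lemma affine_of_second_difference_eq0 (V : comRingType) (E : nat -> V) L :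
    (forall p, (p.+2 <= L)%N -> E p.+2 - 2%:R * E p.+1 + E p = 0) ->
  forall p, (p <= L)%N -> E p = E 0 + (E 1 - E 0) * p%:R.
Proof.
move=> sd0; elim/ltn_ind => -[|[|p]] IH pL.
- by rewrite mulr0 addr0.
- by rewrite mulr1 addrC subrK.
have -> : E p.+2 = 2%:R * E p.+1 - E p.
  by apply/eqP; rewrite -subr_eq0 -(sd0 p pL); apply/eqP; ring.
by rewrite (IH p.+1) ?(IH p) //; try lia; rewrite -[in RHS]addn2 natrD; ring.
Qed.

Section Geometry.
Variables (C : numClosedFieldType) (n R : nat).
Local Notation N := n.+1.
Local Notation Q := (Qp C N).
Local Notation nx := (@ordS N).
Hypothesis N_large : (2 * R + 7 <= N)%N.
Implicit Types (W X : {set 'I_N}).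

Let N_gt1 : (1 < N)%N. Proof. lia. Qed.
Let N_gt4 : (4 < N)%N. Proof. lia. Qed.

Definition pt k : 'I_N := inord k.
Definition itv lo hi : {set 'I_N} := [set x : 'I_N | lo <= x < hi]%N.

Lemma mem_pt_itv k lo hi : (k < N)%N -> (pt k \in itv lo hi) = (lo <= k < hi)%N.
Proof. by move=> ltkN; rewrite inE inordK. Qed.

Lemma ordS_pt k : (k.+1 < N)%N -> nx (pt k) = pt k.+1.
Proof. by move=> lt; apply: val_inj; rewrite /= !inordK ?modn_small //; lia. Qed.

Lemma domino_pt k : (k.+1 < N)%N -> domino (pt k) = itv k (k + 2).
Proof.
move=> lt; apply/setP => x; rewrite /domino ordS_pt // !inE -!val_eqE /= !inordK; lia.
Qed.

Lemma triomino_pt k : (k.+2 < N)%N -> triomino (pt k) = itv k (k + 3).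
Proof.
move=> lt; apply/setP => x; rewrite /triomino !ordS_pt; try lia.
by rewrite !inE -!val_eqE /= !inordK; lia.
Qed.

Lemma Qp_gt0_setU_itv q k lo W : (forall w, w \in W -> w < lo)%N -> (lo + 2 * k <= N)%N ->
  0 < Q q W -> 0 < Q (q + k) (W :|: itv lo (lo + 2 * k)).
Proof.
move=> Wlo; elim: k => [|k IH] hk QW.
  by rewrite addn0 (_ : W :|: _ = W) //; apply/setP => x; rewrite !inE; lia.
have outside j : (lo + 2 * k <= j < N)%N -> pt j \notin W :|: itv lo (lo + 2 * k).
  move=> hj; rewrite in_setU mem_pt_itv ?negb_or; last by lia.
  by apply/andP; split; [apply/negP => /Wlo; rewrite inordK|]; lia.
rewrite addnS (_ : _ :|: _ = W :|: itv lo (lo + 2 * k) :|: domino (pt (lo + 2 * k))); last first.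
  by rewrite domino_pt -?setUA; [congr (_ :|: _); apply/setP => x; rewrite !inE; lia|lia].
apply: (Qp_gt0_setU_domino N_gt1); first by apply: IH => //; lia.
  by apply: outside; lia.
by rewrite ordS_pt; [apply: outside|]; lia.
Qed.

Lemma disjoint_itv lo1 hi1 lo2 hi2 : (hi1 <= lo2)%N -> [disjoint itv lo1 hi1 & itv lo2 hi2].
Proof. by move=> le; rewrite -setI_eq0; apply/eqP/setP => x; rewrite !inE; lia. Qed.

Lemma cdist_far (u v : 'I_N) : u \in itv 0 3 -> v \in itv (R + 3) (R + 6) -> (R <= cdist u v)%N.
Proof. by rewrite !inE /cdist; case: ifP; lia. Qed.

Local Notation A := (triomino (pt 0)).
Local Notation B := (triomino (pt (R + 3))).

Lemma triomino_pt0 : A = itv 0 3.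
Proof. by rewrite triomino_pt //; lia. Qed.

Lemma triomino_ptR : B = itv (R + 3) (R + 6).
Proof. by rewrite triomino_pt; [rewrite -addnA|lia]. Qed.

Lemma disjoint_AB : [disjoint A & B].
Proof. by rewrite triomino_pt0 triomino_ptR disjoint_itv // leq_addl. Qed.

Variables (c : {set 'I_N} -> {set 'I_N} -> C) (E : nat -> C) (L : nat).
Hypothesis range_c : range_le R c.
Hypothesis eigen : forall p, (p <= L)%N -> forall y, op_apply c (Q p) y = E p * Q p y.

Lemma string_avoids_A_or_B J K : c J K != 0 -> [disjoint A & J :|: K] || [disjoint B & J :|: K].
Proof.
move=> cJK; rewrite triomino_pt0 triomino_ptR -!setI_eq0.
case: (set_0Vmem (itv 0 3 :&: (J :|: K))) => [->|[u]]; first by rewrite eqxx.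
rewrite in_setI => /andP[uA uJK]; apply/orP; right; apply/eqP/setP => v.
rewrite in_setI in_set0; apply/negP => /andP[vB vJK].
by have := range_c cJK uJK vJK; have := cdist_far uA vB; lia.
Qed.

Lemma eigenvalue_second_difference_eq0_long p :
  (p.+2 <= L)%N -> (R + 6 <= 2 * p.+2 <= N)%N -> E p.+2 - 2%:R * E p.+1 + E p = 0.
Proof.
move=> pL /andP[Rp pN]; pose X := itv 3 (R + 3) :|: itv (R + 6) (2 * p.+2).
apply: (eigenvalue_second_difference_eq0 N_gt1 N_gt4 (X := X) eigen string_avoids_A_or_B
          (@local_recursion_triomino C _ N_gt1 N_gt4 _)
          (@local_recursion_triomino C _ N_gt1 N_gt4 _)
          (pattern_within_triomino _) (pattern_within_triomino _) disjoint_AB _ _ pL).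
- by rewrite triomino_pt0 disjoint_setUr !disjoint_itv //; lia.
- by rewrite triomino_ptR disjoint_setUr disjoint_sym !disjoint_itv.
rewrite triomino_pt0 triomino_ptR (_ : _ :|: _ :|: _ = set0 :|: itv 0 (0 + 2 * p.+2)).
  by apply/lt0r_neq0/(Qp_gt0_setU_itv (q := 0)) => // [w|]; rewrite ?inE ?Qp0 ?eqxx ?ltr01.
by apply/setP => x; rewrite !inE; lia.
Qed.

Lemma eigenvalue_second_difference_eq0_short p :
  (p.+2 <= L)%N -> (2 * p.+2 < R + 6)%N -> E p.+2 - 2%:R * E p.+1 + E p = 0.
Proof.
move=> pL pR; pose X := itv (R + 6) (R + 6 + 2 * p).
apply: (eigenvalue_second_difference_eq0 N_gt1 N_gt4 (X := X) eigen string_avoids_A_or_B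
          (@local_recursion_domino C _ N_gt1 N_gt4 _) (@local_recursion_domino C _ N_gt1 N_gt4 _)
          (pattern_within_domino _) (pattern_within_domino _) disjoint_AB _ _ pL).
- by rewrite triomino_pt0 disjoint_itv //; lia.
- by rewrite triomino_ptR disjoint_itv.
rewrite !domino_pt; try lia.
rewrite (_ : p.+2 = 0 + 1 + 1 + p)%N // (_ : _ :|: _ :|: _ = set0 :|: itv 0 (0 + 2 * 1)
    :|: itv (R + 3) (R + 3 + 2 * 1) :|: itv (R + 6) (R + 6 + 2 * p)); last first.
  by apply/setP => x; rewrite !inE; lia.
apply/lt0r_neq0; do 3 (apply: Qp_gt0_setU_itv; [move=> w; rewrite !inE; lia | lia | ]).
by rewrite Qp0 eqxx ltr01.
Qed.

Lemma eigenvalue_second_difference_eq0_cycle p :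
  (p.+2 <= L)%N -> (2 * p.+2 <= N)%N -> E p.+2 - 2%:R * E p.+1 + E p = 0.
Proof.
move=> pL pN; have [Rp|pR] := leqP (R + 6) (2 * p.+2).
  by apply: eigenvalue_second_difference_eq0_long; rewrite ?Rp.
exact: eigenvalue_second_difference_eq0_short.
Qed.

End Geometry.

Theorem corollary1 (C : numClosedFieldType) (k R : nat) :
  (0 < k)%N -> (0 < R)%N ->
  exists N0 : nat, forall N : nat, (N0 < N)%N ->
  forall (c : {set 'I_N} -> {set 'I_N} -> C),
    klocal k c -> range_le R c ->
  forall (E : nat -> C) (L : nat),
    Qp C N L != 0 ->
    (forall p, (L < p)%N -> Qp C N p = 0) ->
    (forall p, (p <= L)%N -> forall y, op_apply c (Qp C N p) y = E p * Qp C N p y) ->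
  exists Om om : C, forall p, (p <= L)%N -> E p = Om + om * p%:R.
Proof.
move=> _ _; exists (2 * R + 6)%N => -[//|n] ltN c _ range_c E L QL _ eigen.
have L_le : (2 * L <= n.+1)%N by apply: Qp_neq0_le QL; lia.
exists (E 0), (E 1 - E 0); apply: affine_of_second_difference_eq0 => p pL.
by apply: (eigenvalue_second_difference_eq0_cycle _ range_c eigen pL); lia.
Qed.
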